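(* Let $d\ge 1$ and let $D=\{(x_i,y_i)\mid i=1,\dots,n\}$ be a finite dataset with $x_i\in\mathbb{R}^d$, $y_i\in\mathbb{R}$, such that for all $i,j$, $y_i\neq y_j$ implies $x_i\neq x_j$. Then there exists a convex-area-wise linear function $f\in CALF(\mathbb{R}^d)$ fitting $D$, i.e. with $f(x_i)=y_i$ for all $i=1,\dots,n$. Furthermore, there exist $d\ge 1$ and a function $f:\mathbb{R}^d\to\mathbb{R}$ such that $f\in CALF(\mathbb{R}^d)$ but $f$ is not a PLDC function.
   Context: A linear (affine) function on $\mathbb{R}^d$ is one of the form $f(x)=\beta_0+\beta_1x_1+\dots+\beta_dx_d$. A convex area is a set of the form $C=\bigcap_{k=1}^{m}\{x\in\mathbb{R}^d\mid \alpha_k\cdot x+\gamma_k\le 0\}$ with $m\ge 1$, $\alpha_k\in\mathbb{R}^d$, $\gamma_k\in\mathbb{R}$. Convex-area-wise linear function (CALF): for $\Omega\subseteq\mathbb{R}^d$, let $H=\{(f_i,C_i)\mid 0\le i\le M\}$ ($M\ge 0$ an integer) where each $f_i$ is a linear function, $C_1,\dots,C_M$ are pairwise disjoint convex areas, and $C_0=\Omega\setminus\bigcup_{i=1}^M C_i$. The function $f_H:\Omega\to\mathbb{R}$, $f_H(x)=\sum_{i=0}^M I_i(x)f_i(x)$, where $I_i$ is the indicator function of $C_i$, is called a convex-area-wise linear function; $CALF(\Omega)$ denotes the set of all such functions (over all choices of $M$ and $H$). PLDC function: a function $f:\mathbb{R}^d\to\mathbb{R}$ is PLDC if there exist $K\in\mathbb{Z}^+$,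 $\alpha_k,\beta_k\in\mathbb{R}^d$ and $c_k,c'_k\in\mathbb{R}$ ($k=1,\dots,K$) such that $f(x)=\max_{1\le k\le K}\{\alpha_k\cdot x+c_k\}-\max_{1\le k\le K}\{\beta_k\cdot x+c'_k\}$ for all $x$. *)

From HB Require Import structures.
From mathcomp Require Import all_boot all_order all_algebra.
From mathcomp Require Import boolp classical_sets reals.
Set Implicit Arguments. Unset Strict Implicit. Unset Printing Implicit Defensive.
Import Order.TTheory GRing.Theory Num.Theory.
Local Open Scope ring_scope.
Local Open Scope classical_set_scope.

Section CALFDefs.
Variables (R : realType) (d : nat).

Definition dotv (a x : 'rV[R]_d) : R := \sum_(i < d) a 0 i * x 0 i.

Definition affine_fun (f : 'rV[R]_d -> R) : Prop :=
  exists (b0 : R) (b : 'rV[R]_d), forall x, f x = b0 + dotv b x.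

Definition convex_area (C : set 'rV[R]_d) : Prop :=
  exists (m : nat) (alpha : 'I_m -> 'rV[R]_d) (gamma : 'I_m -> R),
    (0 < m)%N /\ C = [set x | forall k : 'I_m, dotv (alpha k) x + gamma k <= 0].

Definition indic_set (A : set 'rV[R]_d) (x : 'rV[R]_d) : R :=
  if `[< A x >] then 1 else 0.

Definition CALF (Omega : set 'rV[R]_d) (f : 'rV[R]_d -> R) : Prop :=
  exists (M : nat) (fs : 'I_M.+1 -> 'rV[R]_d -> R) (Cs : 'I_M.+1 -> set 'rV[R]_d),
    [/\ forall i, affine_fun (fs i),
        forall i : 'I_M.+1, i != ord0 -> convex_area (Cs i),
        forall i j : 'I_M.+1, i != ord0 -> j != ord0 -> i != j ->
          Cs i `&` Cs j = set0,
        Cs ord0 = Omega `\` [set x | exists i : 'I_M.+1, i != ord0 /\ Cs i x]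
      & forall x, Omega x ->
          f x = \sum_(i < M.+1) indic_set (Cs i) x * fs i x].

Definition PLDC (f : 'rV[R]_d -> R) : Prop :=
  exists (K : nat) (alpha beta : 'I_K.+1 -> 'rV[R]_d) (c c' : 'I_K.+1 -> R),
    forall x,
      f x = \big[Num.max/(dotv (alpha ord0) x + c ord0)]_(k < K.+1)
                (dotv (alpha k) x + c k)
          - \big[Num.max/(dotv (beta ord0) x + c' ord0)]_(k < K.+1)
                (dotv (beta k) x + c' k).

End CALFDefs.

(* A dataset is fitted by giving every distinct data point its own cell: a
   singleton of R^d is the convex area cut out by the 2d half-spaces
   +-(x_k - p_k) <= 0, and the function is the constant y_i on the cell of x_i
   and 0 elsewhere.  Conversely the step function 1_{x <= 0} on R is CALF with
   one half-line as its cell, but it is not PLDC: a maximum of finitely many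
   affine functions is Lipschitz along every line, hence so is a difference of
   two of them, and such a function cannot jump. *)
From HB Require Import structures.
From mathcomp Require Import all_boot all_order all_algebra.
From mathcomp Require Import boolp classical_sets reals.
From mathcomp Require Import lra ring.
Set Implicit Arguments. Unset Strict Implicit.
Import Order.TTheory GRing.Theory Num.Theory.
Local Open Scope ring_scope.
Local Open Scope classical_set_scope.

Section DotProduct.
Variables (R : realType) (d : nat).
Implicit Types (a x y : 'rV[R]_d).

Lemma dotv0 x : dotv 0 x = 0.
Proof. by rewrite /dotv big1 // => i _; rewrite mxE mul0r. Qed.

Lemma dotvNl a x : dotv (- a) x = - dotv a x.
Proof. by rewrite /dotv -sumrN; apply: eq_bigr => i _; rewrite mxE mulNr. Qed.

Lemma dotvDr a x y : dotv a (x + y) = dotv a x + dotv a y.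
Proof. by rewrite /dotv -big_split; apply: eq_bigr => i _; rewrite mxE mulrDr. Qed.

Lemma dotvZr a s x : dotv a (s *: x) = s * dotv a x.
Proof. by rewrite /dotv mulr_sumr; apply: eq_bigr => i _; rewrite mxE mulrCA. Qed.

Lemma dotv_delta (j : 'I_d) x : dotv (delta_mx 0 j) x = x 0 j.
Proof.
rewrite /dotv (bigD1 j) //= big1 ?addr0 => [|i /negbTE ij]; rewrite mxE eqxx.
  by rewrite eqxx mul1r.
by rewrite ij mul0r.
Qed.

End DotProduct.

Section ConvexAreas.
Variables (R : realType) (d : nat).
Implicit Types (A : set 'rV[R]_d) (p : 'rV[R]_d).

Lemma affine_cst (v : R) : affine_fun (fun _ : 'rV[R]_d => v).
Proof. by exists v, 0 => x; rewrite dotv0 addr0. Qed.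

Lemma convex_area_halfspace (a : 'rV[R]_d) (g : R) :
  convex_area [set x | dotv a x + g <= 0].
Proof.
exists 1%N, (fun=> a), (fun=> g); split => //.
by apply/seteqP; split => x /= le_x //; exact: le_x ord0.
Qed.

Lemma convex_area_set0 : convex_area (@set0 'rV[R]_d).
Proof.
rewrite -[set0](_ : [set x | dotv 0 x + 1 <= 0] = _).
  exact: convex_area_halfspace.
by apply/seteqP; split => x //=; rewrite dotv0 add0r ler10.
Qed.

Lemma convex_area_set1 p : (0 < d)%N -> convex_area [set p].
Proof.
move=> d_gt0; exists (d + d)%N,
  (fun k => match split k with inl j => delta_mx 0 j | inr j => - delta_mx 0 j end),
  (fun k => match split k with inl j => - p 0 j | inr j => p 0 j end).
split; first by rewrite addn_gt0 d_gt0.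
apply/seteqP; split => [x -> k | x le_x].
  by case: split => j; rewrite ?dotvNl dotv_delta; lra.
apply/matrixP => i j; rewrite [i]ord1.
have := le_x (unsplit (inl j)); have := le_x (unsplit (inr j)).
rewrite !unsplitK /= dotvNl !dotv_delta; lra.
Qed.

Lemma convex_area_sub1 A p : (0 < d)%N -> A `<=` [set p] -> convex_area A.
Proof.
move=> d_gt0 Ap; have [Ap' | nAp] := pselect (A p).
  suff -> : A = [set p] by exact: convex_area_set1.
  by apply/seteqP; split => // x ->.
suff -> : A = set0 by exact: convex_area_set0.
by apply/seteqP; split => // x Ax; apply: nAp; rewrite -(Ap x Ax).
Qed.

End ConvexAreas.

Lemma indic_set1 (R : realType) d (A : set 'rV[R]_d) x : A x -> indic_set A x = 1.
Proof. by move=> Ax; rewrite /indic_set asboolT. Qed.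

Lemma indic_set0 (R : realType) d (A : set 'rV[R]_d) x : ~ A x -> indic_set A x = 0.
Proof. by move=> nAx; rewrite /indic_set asboolF. Qed.

Section Patching.
Variables (R : realType) (d M : nat) (C : 'I_M -> set 'rV[R]_d).
Variables (g0 : 'rV[R]_d -> R) (g : 'I_M -> 'rV[R]_d -> R) (f : 'rV[R]_d -> R).
Hypotheses (g0_affine : affine_fun g0) (g_affine : forall i, affine_fun (g i)).
Hypothesis C_convex : forall i, convex_area (C i).
Hypothesis C_disjoint : forall i j, i != j -> C i `&` C j = set0.
Hypothesis f_out : forall x, ~ (exists i, C i x) -> f x = g0 x.
Hypothesis f_in : forall i x, C i x -> f x = g i x.

Let C_uniq i j x : C i x -> C j x -> i = j.
Proof.
move=> Cix Cjx; case: (eqVneq i j) => // /C_disjoint /seteqP[+ _].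
by move/(_ x (conj Cix Cjx)).
Qed.

Lemma CALF_patch : CALF setT f.
Proof.
pose U := [set x | exists i, C i x].
pose cell k := if unlift ord0 k is Some i then C i else setT `\` U.
pose piece k := if unlift ord0 k is Some i then g i else g0.
have cellE i : cell (lift ord0 i) = C i by rewrite /cell liftK.
have pieceE i : piece (lift ord0 i) = g i by rewrite /piece liftK.
have cell0 : cell ord0 = setT `\` U by rewrite /cell unlift_none.
have piece0 : piece ord0 = g0 by rewrite /piece unlift_none.
exists M, piece, cell; split.
- by move=> k; rewrite /piece; case: unlift.
- by move=> k; case: (unliftP ord0 k) => [i ->|-> /eqP//]; rewrite cellE.
- move=> k l; case: (unliftP ord0 k) => [i ->|-> /eqP//].
  case: (unliftP ord0 l) => [j ->|-> _ /eqP//] _ _ ij.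
  by rewrite !cellE; apply: C_disjoint; apply: contraNneq ij => ->.
- rewrite cell0; congr (_ `\` _); apply/seteqP; split => x /=.
  + by case=> i Cix; exists (lift ord0 i); rewrite cellE eq_sym neq_lift.
  + case=> k []; case: (unliftP ord0 k) => [i ->|-> /eqP//] _.
    by rewrite cellE; exists i.
- move=> x _; rewrite big_ord_recl cell0 piece0.
  under eq_bigr do rewrite cellE pieceE.
  have [[i Cix] | Ux] := pselect (U x).
  + rewrite indic_set0 => [|[_]]; last by apply; exists i.
    rewrite mul0r add0r (bigD1 i) //= indic_set1 // mul1r big1 ?addr0.
      exact: f_in.
    by move=> j /eqP ji; rewrite indic_set0 ?mul0r // => /C_uniq /(_ Cix).
  + rewrite indic_set1 // mul1r big1 ?addr0; first exact: f_out.
    by move=> i _; rewrite indic_set0 ?mul0r // => Cix; apply: Ux; exists i.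
Qed.

End Patching.

Section Fitting.
Variables (R : realType) (d n : nat) (xs : 'I_n -> 'rV[R]_d) (ys : 'I_n -> R).

(* [pick] selects one index per distinct data point, so the cell
   [data_index x = Some i] is [set xs i] if i was selected and empty otherwise. *)
Definition data_index (x : 'rV[R]_d) : option 'I_n := [pick i | xs i == x].

Definition fit (x : 'rV[R]_d) : R := if data_index x is Some i then ys i else 0.

Lemma fit_CALF : (0 < d)%N -> CALF setT fit.
Proof.
move=> d_gt0.
apply: (@CALF_patch _ _ _ (fun i => [set x | data_index x = Some i])
  (fun=> 0) (fun i _ => ys i)).
- exact: affine_cst.
- by move=> i; apply: affine_cst.
- move=> i; apply: (@convex_area_sub1 _ _ _ (xs i)) => // x /=.
  by rewrite /data_index; case: pickP => // j /eqP <- [->].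
- move=> i j ij; apply/seteqP; split => x // [/= -> [eij]].
  by rewrite eij eqxx in ij.
- move=> x x_out; rewrite /fit; case E: (data_index x) => [i|//].
  by case: x_out; exists i.
- by move=> i x; rewrite /fit /= => ->.
Qed.

Lemma fit_data : (forall i j, ys i != ys j -> xs i != xs j) ->
  forall i, fit (xs i) = ys i.
Proof.
move=> consistent i; rewrite /fit /data_index.
case: pickP => [j xji | /(_ i)]; last by rewrite eqxx.
by apply/eqP; apply: contraTT xji => /consistent.
Qed.

End Fitting.

Section MaxAffineLipschitz.
Variable R : realType.

Lemma bigmax_le_shift (I : finType) (x0 y0 e : R) (F G : I -> R) :
  x0 <= y0 + e -> (forall i, F i <= G i + e) ->
  \big[Num.max/x0]_i F i <= \big[Num.max/y0]_i G i + e.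
Proof.
move=> le0 leFG; apply: bigmax_le => [|i _].
  by apply: le_trans le0 _; rewrite lerD2r bigmax_ge_id.
by apply: le_trans (leFG i) _; rewrite lerD2r le_bigmax.
Qed.

Variable d : nat.

Definition max_affine K (a : 'I_K.+1 -> 'rV[R]_d) (c : 'I_K.+1 -> R) x :=
  \big[Num.max/(dotv (a ord0) x + c ord0)]_(k < K.+1) (dotv (a k) x + c k).

Lemma max_affine_line_le K a c (p v : 'rV[R]_d) s t :
  @max_affine K a c (p + s *: v) <=
    max_affine a c (p + t *: v) + \big[Num.max/0]_k `|dotv (a k) v| * `|s - t|.
Proof.
set L := \big[Num.max/0]_k _.
have affine_le k : dotv (a k) (p + s *: v) + c k <=
    dotv (a k) (p + t *: v) + c k + L * `|s - t|.
  have le_L : dotv (a k) v * (s - t) <= L * `|s - t|.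
    by apply: le_trans (ler_norm _) _; rewrite normrM ler_wpM2r // le_bigmax.
  rewrite !dotvDr !dotvZr.
  have -> : s * dotv (a k) v = t * dotv (a k) v + dotv (a k) v * (s - t) by ring.
  lra.
exact: bigmax_le_shift.
Qed.

Lemma PLDC_lipschitz_line (f : 'rV[R]_d -> R) (p v : 'rV[R]_d) : PLDC f ->
  exists L, forall s t, `|f (p + s *: v) - f (p + t *: v)| <= L * `|s - t|.
Proof.
case=> K [a [b [c [c' f_eq]]]].
exists (\big[Num.max/0]_k `|dotv (a k) v| + \big[Num.max/0]_k `|dotv (b k) v|).
move=> s t; rewrite !f_eq ler_norml mulrDl.
have := max_affine_line_le a c p v s t; have := max_affine_line_le a c p v t s.
have := max_affine_line_le b c' p v s t; have := max_affine_line_le b c' p v t s.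
rewrite /max_affine (distrC t s); lra.
Qed.

End MaxAffineLipschitz.

Section Heaviside.
Variable R : realType.

Definition halfline : set 'rV[R]_1 := [set x | x 0 0 <= 0].

Definition heaviside : 'rV[R]_1 -> R := indic_set halfline.

Lemma convex_area_halfline : convex_area halfline.
Proof.
suff -> : halfline = [set x | dotv (const_mx 1) x + 0 <= 0].
  exact: convex_area_halfspace.
by apply/seteqP; split => x; rewrite /= addr0 /dotv big_ord1 mxE mul1r.
Qed.

Lemma heaviside_CALF : CALF setT heaviside.
Proof.
apply: (@CALF_patch _ _ 1 (fun=> halfline) (fun=> 0) (fun _ _ => 1)).
- exact: affine_cst.
- by move=> _; apply: affine_cst.
- by move=> _; apply: convex_area_halfline.
- by move=> i j; rewrite !ord1 eqxx.
- move=> x x_out; rewrite /heaviside indic_set0 // => le_x.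
  by apply: x_out; exists ord0.
- by move=> _ x le_x; rewrite /heaviside indic_set1.
Qed.

Lemma heaviside_not_PLDC : ~ PLDC heaviside.
Proof.
move=> /(PLDC_lipschitz_line 0 (const_mx 1)) [L lipL].
pose s := (`|L| + 1)^-1.
have s_gt0 : 0 < s by rewrite invr_gt0 ltr_wpDl.
have Ls_lt1 : L * s < 1.
  by rewrite ltr_pdivrMr ?ltr_wpDl // mul1r; have := ler_norm L; lra.
have at0 : heaviside 0 = 1 by rewrite /heaviside indic_set1 //= /halfline /= mxE.
have at_s : heaviside (s *: const_mx 1) = 0.
  rewrite /heaviside indic_set0 //= /halfline /= !mxE mulr1.
  by apply/negP; rewrite -ltNge.
have := lipL 0 s; rewrite scale0r !add0r at0 at_s subr0 normr1 normrN gtr0_norm //.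
lra.
Qed.

End Heaviside.

Theorem theorem1 (R : realType) :
  (forall (d n : nat) (xs : 'I_n -> 'rV[R]_d) (ys : 'I_n -> R),
      (0 < d)%N ->
      (forall i j : 'I_n, ys i != ys j -> xs i != xs j) ->
      exists f : 'rV[R]_d -> R,
        CALF setT f /\ (forall i : 'I_n, f (xs i) = ys i))
  /\
  (exists (d : nat) (f : 'rV[R]_d -> R),
      (0 < d)%N /\ CALF setT f /\ ~ PLDC f).
Proof.
split.
- move=> d n xs ys d_gt0 consistent; exists (fit xs ys).
  by split; [exact: fit_CALF | exact: fit_data].
- exists 1%N, (@heaviside R); split => //.
  by split; [exact: heaviside_CALF | exact: heaviside_not_PLDC].
Qed.
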